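(* Let $w\in\{a,b\}^*$ (with $a\neq b$) satisfy $l(w)\ge 9$. Then there exists an element of $\mathtt{BR}(w)$ that is not rich.
   Context: For a word $w=w_1\cdots w_n$, $w^R=w_n\cdots w_1$; $w$ is a palindrome if $w=w^R$; a factor of $w$ is a word $u$ with $w=puq$. A word $w$ is rich if the number of distinct nonempty palindromic factors of $w$ equals $|w|$. The block reversal of a nonempty word $w$ is $\mathtt{BR}(w)=\{B_t\cdots B_1 : w=B_1\cdots B_t,\ t\ge1,\ \text{each } B_i \text{ nonempty}\}$. Every nonempty word has a unique run-length encoding $w=c_1^{n_1}\cdots c_k^{n_k}$ with letters $c_i\neq c_{i+1}$ and $n_i\ge1$; $l(w)=k$ is the length of its run sequence. *)

From mathcomp Require Import all_boot.
Set Implicit Arguments. Unset Strict Implicit. Unset Printing Implicit Defensive.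

Section Words.
Variable T : eqType.

Definition palindrome (w : seq T) : bool := w == rev w.

Definition factor (u w : seq T) : Prop := exists p q, w = p ++ u ++ q.

Definition nonempty_factors (w : seq T) : seq (seq T) :=
  flatten [seq [seq take j (drop i w) | j <- iota 1 (size w - i)]
          | i <- iota 0 (size w)].

Definition num_pal_factors (w : seq T) : nat :=
  size (undup (filter palindrome (nonempty_factors w))).

Definition rich (w : seq T) : bool := num_pal_factors w == size w.

Definition in_BR (v w : seq T) : Prop :=
  exists bs : seq (seq T),
    [/\ bs != [::], all (fun B => B != [::]) bs,
        flatten bs = w & v = flatten (rev bs)].

Fixpoint rle (w : seq T) : seq (T * nat) :=
  match w with
  | [::] => [::]
  | x :: w' =>
      match rle w' with
      | (y, n) :: r => if x == y then (y, n.+1) :: r else (x, 1) :: (y, n) :: r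
      | [::] => [:: (x, 1)]
      end
  end.

Definition run_len (w : seq T) : nat := size (rle w).

End Words.

(* A block reversal of w can bring letters from distant places of w next to
   each other: if w = A Y G1 B_1 ... B_k G2 X B, then cutting w into the blocks
   A, Y G1, B_1, ..., B_k, G2 X, B shows that X B_k ... B_1 Y is a factor of an
   element of BR(w).  Richness is inherited by factors (appending a letter
   creates at most one new palindrome), so it suffices to assemble in this way
   a copy of the non-rich word aababbaa or of its reversal aabbabaa.  For a
   binary word with at least nine runs this is possible in every case,
   according to which of the runs 3 to 7 have length one; the letters of long
   runs that the construction does not use are hidden in the pieces A, G1, G2
   and B. *)

From mathcomp Require Import all_boot zify.
Set Implicit Arguments. Unset Strict Implicit. Unset Printing Implicit Defensive.

Section PalindromicFactors.
Variable T : eqType.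
Implicit Types (x : T) (s u v w : seq T).

Lemma mem_nonempty_factors s w :
  (s \in nonempty_factors w) = (s != [::]) && infix s w.
Proof.
apply/idP/andP => [|[s_ne /infixP[p [q ->]]]].
  case/flattenP=> ? /mapP[i]; rewrite mem_iota add0n => /andP[_ lt_iw] ->.
  case/mapP=> j; rewrite mem_iota => /andP[j_gt0 lt_j] ->; split.
    by rewrite -size_eq0 size_take size_drop; case: ifP; lia.
  by apply/infixP; exists (take i w), (drop j (drop i w)); rewrite !cat_take_drop.
have s_gt0 : 0 < size s by rewrite lt0n size_eq0.
apply/flattenP; exists [seq take j (drop (size p) (p ++ s ++ q))
                       | j <- iota 1 (size (p ++ s ++ q) - size p)].
  by apply/mapP; exists (size p); rewrite // mem_iota !size_cat; lia.
apply/mapP; exists (size s); first by rewrite mem_iota !size_cat; lia.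
by rewrite drop_size_cat // take_size_cat.
Qed.

Definition pal_factors w := undup [seq s <- nonempty_factors w | palindrome s].

Lemma num_pal_factorsE w : num_pal_factors w = size (pal_factors w).
Proof. by []. Qed.

Lemma pal_factors_uniq w : uniq (pal_factors w).
Proof. exact: undup_uniq. Qed.

Lemma mem_pal_factors s w :
  (s \in pal_factors w) = [&& palindrome s, s != [::] & infix s w].
Proof. by rewrite mem_undup mem_filter mem_nonempty_factors. Qed.

Lemma num_pal_factors_subset u w :
  {subset pal_factors u <= pal_factors w} -> num_pal_factors u <= num_pal_factors w.
Proof. exact/uniq_leq_size/pal_factors_uniq. Qed.

Lemma num_pal_factors_rev w : num_pal_factors (rev w) = num_pal_factors w.
Proof.
suff le_rev v : num_pal_factors (rev v) <= num_pal_factors v.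
  by apply/eqP; rewrite eqn_leq le_rev -{1}(revK w) le_rev.
apply: num_pal_factors_subset => s; rewrite !mem_pal_factors.
case/and3P=> pal_s -> s_v; rewrite pal_s; move/eqP: pal_s => ->.
by rewrite -infix_rev revK in s_v.
Qed.

Lemma suffix_leq_size s1 s2 w :
  suffix s1 w -> suffix s2 w -> size s1 <= size s2 -> suffix s1 s2.
Proof.
rewrite -!prefix_rev !prefixE !size_rev => /eqP e1 /eqP e2 le12.
by rewrite -e1 -e2 take_takel.
Qed.

(* The shorter of two palindromic suffixes is also a prefix of the longer one,
   so unless they are equal it already occurs in [u]. *)
Lemma new_pal_suffix_unique x u s1 s2 :
  palindrome s1 -> palindrome s2 -> suffix s1 (rcons u x) -> suffix s2 (rcons u x) ->
  ~~ infix s1 u -> ~~ infix s2 u -> s1 = s2.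
Proof.
wlog le12 : s1 s2 / size s1 <= size s2.
  move=> wlog_le p1 p2 f1 f2 n1 n2.
  by case: (leqP (size s1) (size s2)) => [|/ltnW] le; [|symmetry]; apply: wlog_le.
move=> /eqP p1 /eqP p2 f1 /[dup] f2 /suffixP[q e2] /negP n1 _.
have /prefixP[t e12] : prefix s1 s2.
  by rewrite p1 p2 prefix_rev (suffix_leq_size f1 f2).
case/lastP: t e12 => [|t y] e12; first by rewrite e12 cats0.
move: e2; rewrite e12 -rcons_cat -rcons_cat => /rcons_inj[e _].
by case: n1; rewrite e; exact: infix_infix.
Qed.

Lemma num_pal_factors_rcons u x :
  num_pal_factors (rcons u x) <= (num_pal_factors u).+1.
Proof.
rewrite !num_pal_factorsE -(count_predC (mem (pal_factors u))) -addn1 leq_add //.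
  rewrite -size_filter uniq_leq_size ?filter_uniq ?pal_factors_uniq // => s.
  by rewrite mem_filter => /andP[].
rewrite -size_filter; set N := filter _ _.
have new_pal s : s \in N -> [/\ palindrome s, suffix s (rcons u x) & ~~ infix s u].
  rewrite mem_filter /= !mem_pal_factors negb_and.
  case: (palindrome s) (s != [::]) => [] [] //= /andP[s_u].
  by rewrite infix_rconsl (negbTE s_u) orbF.
have : uniq N by apply/filter_uniq/pal_factors_uniq.
case: N new_pal => [|s1 [|s2 ss]] //= new_pal /andP[s12 _].
have [p1 f1 n1] := new_pal s1 (mem_head _ _).
have [p2 f2 n2] : [/\ palindrome s2, suffix s2 (rcons u x) & ~~ infix s2 u].
  by apply: new_pal; rewrite !inE eqxx orbT.
by move: s12; rewrite inE (new_pal_suffix_unique p1 p2 f1 f2 n1 n2) eqxx.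
Qed.

Lemma num_pal_factors_catr u v :
  num_pal_factors (u ++ v) <= num_pal_factors u + size v.
Proof.
elim/last_ind: v => [|v x IHv]; first by rewrite cats0 addn0.
rewrite -rcons_cat size_rcons addnS.
by apply: leq_trans (num_pal_factors_rcons _ _) _; rewrite ltnS.
Qed.

Lemma num_pal_factors_catl u v :
  num_pal_factors (u ++ v) <= size u + num_pal_factors v.
Proof.
rewrite -num_pal_factors_rev rev_cat addnC -(size_rev u) -(num_pal_factors_rev v).
exact: num_pal_factors_catr.
Qed.

Lemma num_pal_factors_leq_size w : num_pal_factors w <= size w.
Proof. exact: (num_pal_factors_catr [::] w). Qed.

Lemma rich_infix u w : infix u w -> rich w -> rich u.
Proof.
case/infixP=> p [q ->] /eqP rich_w; rewrite /rich eqn_leq num_pal_factors_leq_size.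
have := num_pal_factors_catl p (u ++ q); have := num_pal_factors_catr u q.
by rewrite rich_w !size_cat; lia.
Qed.

Lemma rich_rev w : rich (rev w) = rich w.
Proof. by rewrite /rich num_pal_factors_rev size_rev. Qed.
End PalindromicFactors.

Lemma rich_map (T1 T2 : eqType) (f : T1 -> T2) (w : seq T1) :
  injective f -> rich (map f w) = rich w.
Proof.
move=> f_inj; have map_inj : injective (map f) := inj_map f_inj.
rewrite /rich /num_pal_factors size_map; congr (_ == _).
have -> : nonempty_factors (map f w) = map (map f) (nonempty_factors w).
  rewrite /nonempty_factors map_flatten -map_comp size_map; congr flatten.
  by apply: eq_map => i /=; rewrite -map_comp; apply: eq_map => j /=; rewrite map_take map_drop.
rewrite filter_map undup_map_inj // size_map; congr (size (undup _)).
by apply: eq_filter => s /=; rewrite /palindrome -map_rev (inj_eq map_inj).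
Qed.

Lemma aababbaa_not_rich (T : eqType) (x y : T) :
  x != y -> ~~ rich [:: x; x; y; x; y; y; x; x].
Proof.
move=> xy; pose f (b : bool) := if b then x else y.
have f_inj : injective f.
  by move=> [] [] //= /eqP; rewrite ?(negbTE xy) // eq_sym (negbTE xy).
have -> : [:: x; x; y; x; y; y; x; x] =
  map f [:: true; true; false; true; false; false; true; true] by [].
by rewrite rich_map.
Qed.

Lemma aabbabaa_not_rich (T : eqType) (x y : T) :
  x != y -> ~~ rich [:: x; x; y; y; x; y; x; x].
Proof. by move=> xy; rewrite -rich_rev aababbaa_not_rich. Qed.

Section BlockReversal.
Variable T : eqType.
Implicit Types (w v : seq T) (bs : seq (seq T)).

Definition has_nonrich_BR w := exists v, in_BR v w /\ ~~ rich v.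

Lemma in_BR_flatten bs : flatten (rev bs) != [::] -> in_BR (flatten (rev bs)) (flatten bs).
Proof.
have flatten_nonnil cs : flatten [seq B <- cs | B != [::]] = flatten cs.
  by elim: cs => //= -[|x B] cs /= ->.
move=> v_ne; exists [seq B <- bs | B != [::]]; split.
- by move: v_ne; apply: contra => /eqP filter_nil; rewrite -flatten_nonnil filter_rev filter_nil.
- exact: filter_all.
- exact: flatten_nonnil.
- by rewrite -filter_rev flatten_nonnil.
Qed.

Lemma has_nonrich_BR_flatten bs : ~~ rich (flatten (rev bs)) -> has_nonrich_BR (flatten bs).
Proof.
move=> nonrich_v; exists (flatten (rev bs)); split => //.
by apply: in_BR_flatten; apply: contraNneq nonrich_v => ->.
Qed.

Lemma has_nonrich_BR_infix u w : infix u w -> has_nonrich_BR u -> has_nonrich_BR w.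
Proof.
case/infixP=> p [q ->] [_ [[bs [_ _ <- ->]] nonrich_v]].
have := has_nonrich_BR_flatten (bs := [:: p] ++ bs ++ [:: q]).
rewrite !rev_cat !flatten_cat /= !cats0 -!catA; apply.
by move: nonrich_v; apply: contra; apply: rich_infix; apply: infix_infix.
Qed.

Lemma has_nonrich_BR_split w A Y G1 bs G2 X B :
  w = A ++ Y ++ G1 ++ flatten bs ++ G2 ++ X ++ B ->
  ~~ rich (X ++ flatten (rev bs) ++ Y) -> has_nonrich_BR w.
Proof.
move=> -> nonrich_u.
have := has_nonrich_BR_flatten (bs := [:: A; Y ++ G1] ++ bs ++ [:: G2 ++ X; B]).
rewrite !rev_cat !flatten_cat /= !cats0 -!catA; apply.
move: nonrich_u; apply: contra; apply: rich_infix.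
by apply/infixP; exists (B ++ G2), (G1 ++ A); rewrite -!catA.
Qed.
End BlockReversal.
Arguments has_nonrich_BR_split {T w} A Y G1 bs G2 X B.

Lemma cons_nseq_cat (T : Type) (x : T) n s : x :: nseq n x ++ s = nseq n x ++ x :: s.
Proof. by elim: n => //= n ->. Qed.

Section NineRuns.
Variables (T : eqType) (c d : T).

Definition nine_runs n1 n2 n3 n4 n5 n6 n7 n8 n9 :=
  nseq n1.+1 c ++ nseq n2.+1 d ++ nseq n3.+1 c ++ nseq n4.+1 d ++ nseq n5.+1 c ++
  nseq n6.+1 d ++ nseq n7.+1 c ++ nseq n8.+1 d ++ nseq n9.+1 c.

Hypothesis cd : c != d.
Let dc : d != c. Proof. by rewrite eq_sym. Qed.

Local Ltac solve_runs_eq := by rewrite /nine_runs /= -?catA /= -?catA ?cons_nseq_cat.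

(* Witnesses found by computer search: in each case [X ++ flatten (rev bs) ++ Y]
   spells aababbaa or aabbabaa over {c, d}. *)

Lemma has_nonrich_BR_third_run_single n1 n2 n4 n5 n6 n7 n8 n9 :
  has_nonrich_BR (nine_runs n1 n2 0 n4 n5 n6 n7 n8 n9).
Proof.
case: n4 => [|n4].
- case: n5 => [|n5].
  + case: n6 => [|n6].
    * apply: (has_nonrich_BR_split [::] [:: c] (nseq n1 c ++ nseq n2 d)
        [:: [:: d; c]; [:: d]; [:: c; d; c]] (nseq n7 c ++ [:: d] ++ nseq n8 d) [:: c]
        (nseq n9 c)); [solve_runs_eq | exact: aababbaa_not_rich cd].
    * case: n7 => [|n7].
      -- apply: (has_nonrich_BR_split (c :: nseq n1 c) [:: d] (nseq n2 d)
           [:: [:: c; d]; [:: c]] (nseq n6 d) [:: d; d; c; d]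
           (nseq n8 d ++ [:: c] ++ nseq n9 c)); [solve_runs_eq | exact: aababbaa_not_rich dc].
      -- apply: (has_nonrich_BR_split [::] [:: c] (nseq n1 c ++ [:: d] ++ nseq n2 d)
           [:: [:: c]; [:: d; c; d; d]] (nseq n6 d) [:: c; c]
           (nseq n7 c ++ [:: d] ++ nseq n8 d ++ [:: c] ++ nseq n9 c));
           [solve_runs_eq | exact: aababbaa_not_rich cd].
  + apply: (has_nonrich_BR_split (c :: nseq n1 c ++ nseq n2 d) [:: d; c; d; c; c]
      (nseq n5 c ++ nseq n6 d) [:: [:: d]; [:: c]] (nseq n7 c ++ [:: d] ++ nseq n8 d) [:: c]
      (nseq n9 c)); [solve_runs_eq | exact: aabbabaa_not_rich cd].
- case: n6 => [|n6].
  + apply: (has_nonrich_BR_split (c :: nseq n1 c ++ nseq n2 d) [:: d; c; d; d]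
      (nseq n4 d ++ nseq n5 c) [:: [:: c]; [:: d; c]] (nseq n7 c) [:: d]
      (nseq n8 d ++ [:: c] ++ nseq n9 c)); [solve_runs_eq | exact: aabbabaa_not_rich dc].
  + apply: (has_nonrich_BR_split (c :: nseq n1 c ++ nseq n2 d) [:: d; c; d; d] (nseq n4 d)
      [:: [:: c]] (nseq n5 c ++ nseq n6 d) [:: d; d; c]
      (nseq n7 c ++ [:: d] ++ nseq n8 d ++ [:: c] ++ nseq n9 c));
      [solve_runs_eq | exact: aabbabaa_not_rich dc].
Qed.

Lemma has_nonrich_BR_third_run_long n1 n2 n3 n4 n5 n6 n7 n8 n9 :
  has_nonrich_BR (nine_runs n1 n2 n3.+1 n4 n5 n6 n7 n8 n9).
Proof.
case: n7 => [|n7].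
- case: n6 => [|n6].
  + apply: (has_nonrich_BR_split (c :: nseq n1 c ++ nseq n2 d) [:: d; c; c]
      (nseq n3 c ++ [:: d] ++ nseq n4 d ++ nseq n5 c) [:: [:: c; d; c; d]] (nseq n8 d) [:: c]
      (nseq n9 c)); [solve_runs_eq | exact: aababbaa_not_rich cd].
  + apply: (has_nonrich_BR_split (c :: nseq n1 c) [:: d] (nseq n2 d ++ nseq n3 c)
      [:: [:: c; c; d]] (nseq n4 d ++ [:: c] ++ nseq n5 c ++ nseq n6 d) [:: d; d; c; d]
      (nseq n8 d ++ [:: c] ++ nseq n9 c)); [solve_runs_eq | exact: aababbaa_not_rich dc].
- apply: (has_nonrich_BR_split (c :: nseq n1 c ++ nseq n2 d) [:: d; c; c]
    (nseq n3 c ++ nseq n4 d) [:: [:: d]; [:: c]] (nseq n5 c ++ [:: d] ++ nseq n6 d ++ nseq n7 c)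
    [:: c; c; d] (nseq n8 d ++ [:: c] ++ nseq n9 c)); [solve_runs_eq | exact: aababbaa_not_rich cd].
Qed.

Lemma has_nonrich_BR_nine_runs n1 n2 n3 n4 n5 n6 n7 n8 n9 :
  has_nonrich_BR (nine_runs n1 n2 n3 n4 n5 n6 n7 n8 n9).
Proof.
by case: n3 => [|n3]; [apply: has_nonrich_BR_third_run_single | apply: has_nonrich_BR_third_run_long].
Qed.
End NineRuns.

Section RunLengthEncoding.
Variable T : eqType.
Implicit Types (w : seq T) (p : T * nat).

Lemma flatten_rle w : flatten [seq nseq p.2 p.1 | p <- rle w] = w.
Proof.
elim: w => //= x w; case: (rle w) => [|[y n] r] /= <- //.
by case: eqP => [->|].
Qed.

Lemma rle_gt0 w : all (fun p => 0 < p.2) (rle w).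
Proof.
elim: w => //= x w; case: (rle w) => [|[y n] r] //= /andP[n_gt0 r_gt0].
by case: eqP => /=; rewrite ?n_gt0 r_gt0.
Qed.

Lemma rle_alternating w : sorted (fun p q => p.1 != q.1) (rle w).
Proof.
elim: w => //= x w; case: (rle w) => [|[y n] r] //=.
by case: eqP => [_|/eqP xy] /=; rewrite ?xy //; case: r.
Qed.

Lemma mem_rle w p : p \in rle w -> p.1 \in w.
Proof.
move=> p_w; rewrite -(flatten_rle w); apply/flattenP.
exists (nseq p.2 p.1); first exact: map_f.
by rewrite mem_nseq (allP (rle_gt0 w)) /=.
Qed.

Lemma rle_nine_alternating_runs a b w :
  a != b -> all (fun x => (x == a) || (x == b)) w -> 9 <= run_len w ->
  exists c d n1 n2 n3 n4 n5 n6 n7 n8 n9 r, c != d /\ rle w =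
    [:: (c, n1.+1), (d, n2.+1), (c, n3.+1), (d, n4.+1), (c, n5.+1), (d, n6.+1),
        (c, n7.+1), (d, n8.+1), (c, n9.+1) & r].
Proof.
move=> ab w_ab; rewrite /run_len.
have rle_ab : all (fun p => (p.1 == a) || (p.1 == b)) (rle w).
  by apply/allP => p /mem_rle; apply: (allP w_ab).
move: (rle_gt0 w) (rle_alternating w) rle_ab.
case: (rle w) => [|[c1 [|k1]] [|[c2 [|k2]] [|[c3 [|k3]]
  [|[c4 [|k4]] [|[c5 [|k5]] [|[c6 [|k6]] [|[c7 [|k7]] [|[c8 [|k8]] [|[c9 [|k9]] r]]]]]]]]]
  //= _; rewrite ?andbF //.
case/andP=> c12 /andP[c23 /andP[c34 /andP[c45 /andP[c56 /andP[c67 /andP[c78 /andP[c89 _]]]]]]].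
case/andP=> ab1 /andP[ab2 /andP[ab3 /andP[ab4 /andP[ab5 /andP[ab6 /andP[ab7 /andP[ab8
  /andP[ab9 _]]]]]]]] _.
have alt x y z : (x == a) || (x == b) -> (y == a) || (y == b) -> (z == a) || (z == b) ->
    x != y -> y != z -> z = x.
  by do 3!case/orP=> /eqP->; rewrite ?eqxx // eq_sym (negbTE ab).
have c31 := alt _ _ _ ab1 ab2 ab3 c12 c23; have c42 := alt _ _ _ ab2 ab3 ab4 c23 c34.
have c53 := alt _ _ _ ab3 ab4 ab5 c34 c45; have c64 := alt _ _ _ ab4 ab5 ab6 c45 c56.
have c75 := alt _ _ _ ab5 ab6 ab7 c56 c67; have c86 := alt _ _ _ ab6 ab7 ab8 c67 c78.
have c97 := alt _ _ _ ab7 ab8 ab9 c78 c89.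
exists c1, c2, k1, k2, k3, k4, k5, k6, k7, k8, k9, r.
by rewrite c97 c86 c75 c64 c53 c42 c31.
Qed.

Lemma nine_runs_prefix a b w :
  a != b -> all (fun x => (x == a) || (x == b)) w -> 9 <= run_len w ->
  exists c d n1 n2 n3 n4 n5 n6 n7 n8 n9 rest,
    c != d /\ w = nine_runs c d n1 n2 n3 n4 n5 n6 n7 n8 n9 ++ rest.
Proof.
move=> ab w_ab w_runs.
have [c [d [n1 [n2 [n3 [n4 [n5 [n6 [n7 [n8 [n9 [r [cd rle_w]]]]]]]]]]]]] :=
  rle_nine_alternating_runs ab w_ab w_runs.
exists c, d, n1, n2, n3, n4, n5, n6, n7, n8, n9, (flatten [seq nseq p.2 p.1 | p <- r]).
by split=> //; rewrite -{1}(flatten_rle w) rle_w /nine_runs -!catA.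
Qed.
End RunLengthEncoding.

Theorem mainTheorem7 (T : eqType) (a b : T) (w : seq T) :
  a != b ->
  all (fun x => (x == a) || (x == b)) w ->
  9 <= run_len w ->
  exists v : seq T, in_BR v w /\ ~~ rich v.
Proof.
move=> ab w_ab w_runs.
have [c [d [n1 [n2 [n3 [n4 [n5 [n6 [n7 [n8 [n9 [rest [cd ->]]]]]]]]]]]]] :=
  nine_runs_prefix ab w_ab w_runs.
apply: has_nonrich_BR_infix (prefix_infix _ rest) _.
exact: has_nonrich_BR_nine_runs.
Qed.
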